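(* For a real parameter $g$, let $H^{(7)}(g)$ be the $7\times7$ real matrix with diagonal $(1,3,5,7,9,11,13)$, entries $H_{1,3}=\sqrt3 g$, $H_{2,4}=\sqrt2 g$, $H_{3,5}=2g$, $H_{4,6}=\sqrt2 g$, $H_{5,7}=\sqrt3 g$, entries $H_{n+2,n}=-H_{n,n+2}$ for $n=1,\dots,5$, and all other entries zero. Then the eigenvalues of $H^{(7)}(g)$ are $$E_m(g)=7+m\sqrt{4-g^2},\qquad m\in\{-3,-2,-1,0,1,2,3\}.$$ In particular, for $0\le g<2$ all seven eigenvalues are real and pairwise distinct, while at $g=2$ all of them coincide at $\eta=7$ and $H^{(7)}(2)$ is not diagonalizable: its Jordan form consists of two Jordan blocks for the eigenvalue $7$, of sizes $4$ and $3$ (geometric multiplicity $2$). *)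

From HB Require Import structures.
From mathcomp Require Import all_boot all_order all_algebra.
From mathcomp Require Import complex.
Set Implicit Arguments. Unset Strict Implicit. Unset Printing Implicit Defensive.
Import Order.TTheory GRing.Theory Num.Theory.
Local Open Scope ring_scope.

Definition Hcoef (R : rcfType) (n : nat) : R :=
  match n with
  | 0 => Num.sqrt 3
  | 1 => Num.sqrt 2
  | 2 => 2
  | 3 => Num.sqrt 2
  | 4 => Num.sqrt 3
  | _ => 0
  end.

(* H^(7)(g), with 0-based indices i,j : 'I_7 (paper index = i+1).
   Diagonal 2i+1 = 1,3,...,13; H i (i+2) = c_i g; H (i+2) i = - c_i g. *)
Definition H7 (R : rcfType) (g : R) : 'M[R]_7 :=
  \matrix_(i < 7, j < 7)
    if i == j :> nat then (2 * i + 1)%:R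
    else if (j == i + 2 :> nat) then Hcoef R i * g
    else if (i == j + 2 :> nat) then - (Hcoef R j * g)
    else 0.

Definition jordan_block (R : nzRingType) (n : nat) (a : R) : 'M[R]_n :=
  \matrix_(i < n, j < n)
    if i == j :> nat then a else if (j == i.+1 :> nat) then 1 else 0.

(* E_m(g) with the given square root s of 4 - g^2, m = k - 3, k : 'I_7. *)
Definition Eval (F : nzRingType) (s : F) (k : nat) : F := 7 + (k%:R - 3) * s.

From HB Require Import structures.
From mathcomp Require Import all_boot all_order all_algebra.
From mathcomp Require Import fingroup perm complex zify ring lra.
Import Order.TTheory GRing.Theory Num.Theory.
Local Open Scope ring_scope.

(* H7 g only couples indices of equal parity, so
   the permutation listing the even indices 0,2,4,6 before the odd ones 1,3,5
   conjugates it to a block-diagonal matrix.  Both blocks are "skew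
   tridiagonal" (entries a_i above and -a_i below the diagonal), and for such
   3x3 and 4x4 matrices the characteristic polynomial only involves the
   squares a_i^2; with d = 4 - g^2 this gives
       char_poly (H7 g) = chi7 d
         := (X-7) ((X-7)^2 - 4d) ((X-7)^2 - d) ((X-7)^2 - 9d),
   and chi7 (s^2) = prod_(m = -3..3) (X - (7 + m s)) in any commutative ring.
   Mapping into R[i] gives the complex statement, s = sqrt d the real one.

   The exceptional point g = 2.  There chi7 0 = (X-7)^7.  An explicit
   invertible P (whose rows are the Jordan chains e_0 N^k and e_1 N^k of
   N = H7 2 - 7) satisfies P (H7 2) = J P, J the Jordan matrix with blocks of
   sizes 4 and 3.  Hence dim ker (H7 2 - 7) = 7 - rank (J - 7) = 2, and H7 2 is
   not diagonalizable because a diagonalizable matrix with a single eigenvalue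
   is scalar. *)

Lemma char_poly_conj (T : comNzRingType) (n : nat) (P Q A : 'M[T]_n) :
  P *m Q = 1%:M -> char_poly (P *m A *m Q) = char_poly A.
Proof.
rewrite /char_poly => PQ; have mPQ : map_mx polyC P *m map_mx polyC Q = 1%:M.
  by rewrite -map_mxM PQ map_mx1.
have -> : char_poly_mx (P *m A *m Q)
          = map_mx polyC P *m char_poly_mx A *m map_mx polyC Q.
  rewrite /char_poly_mx mulmxBr mulmxBl !map_mxM -!mulmxA; congr (_ - _).
  by rewrite mul_scalar_mx -scalemxAr mPQ scalemx1.
by rewrite !det_mulmx -mulrA mulrCA -det_mulmx mPQ det1 mulr1.
Qed.

Lemma char_poly_perm {T : comNzRingType} {n : nat} (s : 'S_n) (A : 'M[T]_n) :
  char_poly (row_perm s (col_perm s A)) = char_poly A.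
Proof.
by rewrite row_permE col_permE mulmxA char_poly_conj // -perm_mxM mulgV perm_mx1.
Qed.

Lemma char_poly_block_diag {T : comNzRingType} {m n : nat}
    (A : 'M[T]_m) (B : 'M[T]_n) :
  char_poly (block_mx A 0 0 B) = char_poly A * char_poly B.
Proof. by rewrite /char_poly char_block_diag_mx det_ublock. Qed.

Lemma rank_unit_conj (F : fieldType) (n : nat) (U V X : 'M[F]_n) :
  U \in unitmx -> V \in unitmx -> \rank (U *m X *m V) = \rank X.
Proof. by move=> Uu Vu; rewrite mxrankMfree ?row_free_unit // eqmxMfull ?row_full_unit. Qed.

Lemma rank_eigenspace_similar {F : fieldType} {n : nat} {P A B : 'M[F]_n} (a : F) :
  P \in unitmx -> P *m A = B *m P ->
  \rank (eigenspace A a) = \rank (eigenspace B a).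
Proof.
move=> Pu PA; rewrite /eigenspace !mxrank_ker; congr (_ - _)%N.
have -> : A - a%:M = invmx P *m (B - a%:M) *m P.
  by rewrite mulmxBr mulmxBl -mulmxA -PA mulmxA mulVmx // mul1mx
             mul_mx_scalar -scalemxAl mulVmx // scalemx1.
by rewrite rank_unit_conj ?unitmx_inv.
Qed.

Lemma diagonalizable_single_eigenvalue (F : fieldType) (n : nat) (A : 'M[F]_n) (a : F) :
  diagonalizable A -> char_poly A = ('X - a%:P) ^+ n -> A = a%:M.
Proof.
case=> P Pu; rewrite /similar_to /= conjumx // => diagD charA.
set D := P *m A *m invmx P in diagD.
have charD : char_poly D = ('X - a%:P) ^+ n by rewrite char_poly_conj ?mulmxV.
have Dii i : D i i = a.
  have : root (char_poly D) (D i i).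
    rewrite char_poly_trig ?is_diag_mx_is_trig //; apply/rootP.
    by rewrite horner_prod (bigD1 i) //= hornerXsubC subrr mul0r.
  by rewrite charD => /rootP; rewrite horner_exp hornerXsubC => /eqP;
     rewrite expf_eq0 subr_eq0 => /andP[_ /eqP].
have DE : D = a%:M.
  apply/matrixP => i j; rewrite [RHS]mxE; have [<-|nij] := eqVneq i j.
    by rewrite Dii mulr1n.
  by move/is_diag_mxP: diagD => /(_ i j nij) ->; rewrite mulr0n.
have -> : A = invmx P *m D *m P.
  by rewrite /D !mulmxA mulVmx // mul1mx -mulmxA mulVmx // mulmx1.
by rewrite DE mul_mx_scalar -scalemxAl mulVmx // scalemx1.
Qed.

(* A nilpotent Jordan block of size n+1 has rank n: up to a cyclic
   permutation of its columns it is the partial identity pid_mx n. *)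
Lemma rank_jordan_nilpotent (F : fieldType) (n : nat) (a : F) :
  \rank (jordan_block n.+1 a - a%:M) = n.
Proof.
pose cyc : 'S_n.+1 := perm (@ord_pred_inj n.+1).
have -> : jordan_block n.+1 a - a%:M = col_perm cyc (pid_mx n).
  apply/matrixP => i j; rewrite !mxE permE /=.
  have -> : (i == (j + n.+1).-1 %% n.+1 :> nat)%N && (i < n)%N = (j == i.+1 :> nat).
    have := ltn_ord i; rewrite addnS /=; case: j => [[|j] /= Hj] Hi.
      by rewrite add0n modn_small //; lia.
    by rewrite addSnnS modnDr modn_small //; lia.
  have [<-|ij] := eqVneq i j; first by rewrite (ltn_eqF (ltnSn i)) eqxx mulr1n subrr.
  by rewrite ifN // mulr0n subr0; case: eqP.
by rewrite col_permE mxrankMfree ?row_free_unit ?unitmx_perm // rank_pid_mx.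
Qed.

Lemma block_diag_sub_scalar {T : pzRingType} {m n : nat}
    (A : 'M[T]_m) (B : 'M[T]_n) (a : T) :
  block_mx A 0 0 B - a%:M = block_mx (A - a%:M) 0 0 (B - a%:M).
Proof. by rewrite (scalar_mx_block m n) opp_block_mx add_block_mx !oppr0 !addr0. Qed.

Section SmallDeterminants.
Variable T : comNzRingType.

Definition det3_formula (F : nat -> nat -> T) : T :=
  F 0%N 0%N * (F 1%N 1%N * F 2%N 2%N - F 1%N 2%N * F 2%N 1%N)
  - F 0%N 1%N * (F 1%N 0%N * F 2%N 2%N - F 1%N 2%N * F 2%N 0%N)
  + F 0%N 2%N * (F 1%N 0%N * F 2%N 1%N - F 1%N 1%N * F 2%N 0%N).

Definition det4_formula (F : nat -> nat -> T) : T :=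
  \sum_(j < 4) (-1) ^+ j * F 0%N j * det3_formula (fun a b => F a.+1 (bump j b)).

Lemma det_mx33 (F : nat -> nat -> T) :
  \det (\matrix_(i < 3, j < 3) F i j) = det3_formula F.
Proof.
rewrite (expand_det_row _ 0) !big_ord_recl big_ord0 /cofactor.
rewrite !(expand_det_row _ 0) !big_ord_recl !big_ord0 /cofactor !det_mx11 !mxE.
by rewrite /det3_formula /= /bump /=; ring.
Qed.

Lemma det_mx44 (F : nat -> nat -> T) :
  \det (\matrix_(i < 4, j < 4) F i j) = det4_formula F.
Proof.
rewrite (expand_det_row _ 0) /det4_formula; apply: eq_bigr => j _.
rewrite /cofactor -det_mx33 mxE add0n mulrCA mulrA; congr (_ * \det _).
by apply/matrixP => a b; rewrite !mxE.
Qed.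

End SmallDeterminants.
Arguments det3_formula {T}.
Arguments det4_formula {T}.
Arguments det_mx33 {T}.
Arguments det_mx44 {T}.

Lemma char_poly_mx_fun {T : nzRingType} {n : nat} (F : nat -> nat -> T) :
  char_poly_mx (\matrix_(i < n, j < n) F i j)
  = \matrix_(i < n, j < n) ('X *+ (i == j :> nat) - (F i j)%:P).
Proof. by apply/matrixP => i j; rewrite !mxE. Qed.

Lemma char_poly_mx33 {T : comNzRingType} (F : nat -> nat -> T) :
  char_poly (\matrix_(i < 3, j < 3) F i j)
  = det3_formula (fun a b => 'X *+ (a == b) - (F a b)%:P).
Proof.
by rewrite /char_poly char_poly_mx_fun (det_mx33 (fun a b => 'X *+ (a == b) - (F a b)%:P)).
Qed.

Lemma char_poly_mx44 {T : comNzRingType} (F : nat -> nat -> T) :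
  char_poly (\matrix_(i < 4, j < 4) F i j)
  = det4_formula (fun a b => 'X *+ (a == b) - (F a b)%:P).
Proof.
by rewrite /char_poly char_poly_mx_fun (det_mx44 (fun a b => 'X *+ (a == b) - (F a b)%:P)).
Qed.

Definition skew_tridiag_entry {T : nzRingType} (d a : nat -> T) (i j : nat) : T :=
  if i == j then d i
  else if j == i.+1 then a i
  else if i == j.+1 then - a j
  else 0.

Definition skew_tridiag {T : nzRingType} (n : nat) (d a : nat -> T) : 'M[T]_n :=
  \matrix_(i < n, j < n) skew_tridiag_entry d a i j.

Lemma char_poly_skew_tridiag3 {T : comNzRingType} (d a : nat -> T) :
  char_poly (skew_tridiag 3 d a)
  = ('X - (d 0%N)%:P) * ('X - (d 1%N)%:P) * ('X - (d 2%N)%:P)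
    + (a 0%N ^+ 2)%:P * ('X - (d 2%N)%:P) + (a 1%N ^+ 2)%:P * ('X - (d 0%N)%:P).
Proof.
rewrite /skew_tridiag char_poly_mx33 /skew_tridiag_entry /det3_formula /=.
by rewrite !polyC_exp !polyCN !polyC0; ring.
Qed.

Lemma char_poly_skew_tridiag4 {T : comNzRingType} (d a : nat -> T) :
  char_poly (skew_tridiag 4 d a)
  = ('X - (d 0%N)%:P) * ('X - (d 1%N)%:P) * ('X - (d 2%N)%:P) * ('X - (d 3%N)%:P)
    + (a 0%N ^+ 2)%:P * ('X - (d 2%N)%:P) * ('X - (d 3%N)%:P)
    + (a 1%N ^+ 2)%:P * ('X - (d 0%N)%:P) * ('X - (d 3%N)%:P)
    + (a 2%N ^+ 2)%:P * ('X - (d 0%N)%:P) * ('X - (d 1%N)%:P)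
    + (a 0%N ^+ 2 * a 2%N ^+ 2)%:P.
Proof.
rewrite /skew_tridiag char_poly_mx44 /skew_tridiag_entry.
rewrite /det4_formula !big_ord_recl big_ord0 /det3_formula /= /bump /=.
by rewrite polyCM !polyC_exp !polyCN !polyC0; ring.
Qed.

(* In H7 the test
   "j = i + 2" is performed in 'I_7, i.e. modulo 7, but the wrapped-around
   positions carry the coefficients Hcoef 5 = Hcoef 6 = 0. *)
Definition Hentry {R : rcfType} (g : R) (i j : nat) : R :=
  if i == j then (2 * i + 1)%:R
  else if j == (i + 2)%N then Hcoef R i * g
  else if i == (j + 2)%N then - (Hcoef R j * g)
  else 0.

Lemma H7E (R : rcfType) (g : R) : H7 g = \matrix_(i < 7, j < 7) Hentry g i j.
Proof.
apply/matrixP => -[[|[|[|[|[|[|[|i]]]]]]] Hi] // [[|[|[|[|[|[|[|j]]]]]]] Hj] //;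
  by rewrite !mxE /= ?mul0r ?oppr0.
Qed.

Lemma Hentry_parity (R : rcfType) (g : R) (i j : nat) :
  odd (i + j) -> Hentry g i j = 0.
Proof.
rewrite /Hentry; case: eqP => [<-|_]; first by rewrite addnn odd_double.
case: eqP => [->|_]; first by rewrite addnA addnn oddD odd_double.
by case: eqP => [->|_ //]; rewrite addnAC addnn oddD odd_double.
Qed.

Definition parity_fun (i : 'I_7) : 'I_7 :=
  inord (if (i < 4)%N then i.*2 else (i - 4).*2.+1).

Lemma parity_fun_val (i : 'I_7) :
  parity_fun i = (if (i < 4)%N then i.*2 else (i - 4).*2.+1) :> nat.
Proof. by rewrite inordK //; have := ltn_ord i; case: ifP => ? ?; lia. Qed.

Lemma parity_fun_inj : injective parity_fun.
Proof.
move=> i j /(congr1 (@nat_of_ord 7)); rewrite !parity_fun_val => eq_ij.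
by apply/val_inj => /=; move: eq_ij; case: ifP => ?; case: ifP => ?; lia.
Qed.

Definition parity_perm : 'S_7 := perm parity_fun_inj.

Lemma parity_perm_lshift (i : 'I_4) : parity_perm (lshift 3 i) = i.*2 :> nat.
Proof. by rewrite permE parity_fun_val /= ltn_ord. Qed.

Lemma parity_perm_rshift (i : 'I_3) : parity_perm (rshift 4 i) = i.*2.+1 :> nat.
Proof. by rewrite permE parity_fun_val /= addKn. Qed.

Definition H7even {R : rcfType} (g : R) : 'M[R]_4 :=
  \matrix_(i < 4, j < 4) Hentry g i.*2 j.*2.

Definition H7odd {R : rcfType} (g : R) : 'M[R]_3 :=
  \matrix_(i < 3, j < 3) Hentry g i.*2.+1 j.*2.+1.

Lemma H7_parity_blocks (R : rcfType) (g : R) :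
  row_perm parity_perm (col_perm parity_perm (H7 g))
  = block_mx (H7even g) 0 0 (H7odd g).
Proof.
rewrite -[LHS](@submxK _ 4 3 4 3) H7E; congr (@block_mx _ 4 3 4 3 _ _ _ _);
  apply/matrixP => i j; rewrite !mxE ?parity_perm_lshift ?parity_perm_rshift //.
- by rewrite Hentry_parity // oddD /= !odd_double.
- by rewrite Hentry_parity // oddD /= !odd_double.
Qed.

Lemma H7even_tridiag (R : rcfType) (g : R) :
  H7even g = skew_tridiag 4 (fun i => (4 * i + 1)%:R) (fun i => Hcoef R i.*2 * g).
Proof.
apply/matrixP => i j; rewrite !mxE /Hentry /skew_tridiag_entry.
have -> : (i.*2 == j.*2) = (i == j :> nat) by lia.
have -> : (j.*2 == i.*2 + 2)%N = (j == i.+1 :> nat) by lia.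
have -> : (i.*2 == j.*2 + 2)%N = (i == j.+1 :> nat) by lia.
by case: eqP => // ->; congr _%:R; lia.
Qed.

Lemma H7odd_tridiag (R : rcfType) (g : R) :
  H7odd g = skew_tridiag 3 (fun i => (4 * i + 3)%:R) (fun i => Hcoef R i.*2.+1 * g).
Proof.
apply/matrixP => i j; rewrite !mxE /Hentry /skew_tridiag_entry.
have -> : (i.*2.+1 == j.*2.+1) = (i == j :> nat) by lia.
have -> : (j.*2.+1 == i.*2.+1 + 2)%N = (j == i.+1 :> nat) by lia.
have -> : (i.*2.+1 == j.*2.+1 + 2)%N = (i == j.+1 :> nat) by lia.
by case: eqP => // ->; congr _%:R; lia.
Qed.

Lemma char_poly_H7even (R : rcfType) (g : R) :
  char_poly (H7even g)
  = (('X - 7%:P) ^+ 2 - (4 - g ^+ 2)%:P) * (('X - 7%:P) ^+ 2 - (9 * (4 - g ^+ 2))%:P).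
Proof.
rewrite H7even_tridiag char_poly_skew_tridiag4 /= !exprMn sqr_sqrtr ?ler0n //.
by rewrite !(polyCM, polyCB, polyC_exp) !rmorph_nat; ring.
Qed.

Lemma char_poly_H7odd (R : rcfType) (g : R) :
  char_poly (H7odd g) = ('X - 7%:P) * (('X - 7%:P) ^+ 2 - (4 * (4 - g ^+ 2))%:P).
Proof.
rewrite H7odd_tridiag char_poly_skew_tridiag3 /= !exprMn sqr_sqrtr ?ler0n //.
by rewrite !(polyCM, polyCB, polyC_exp) !rmorph_nat; ring.
Qed.

Definition chi7 {T : comNzRingType} (d : T) : {poly T} :=
  ('X - 7%:P) * (('X - 7%:P) ^+ 2 - (4 * d)%:P)
  * ((('X - 7%:P) ^+ 2 - d%:P) * (('X - 7%:P) ^+ 2 - (9 * d)%:P)).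

Lemma char_poly_H7 (R : rcfType) (g : R) : char_poly (H7 g) = chi7 (4 - g ^+ 2).
Proof.
rewrite -(char_poly_perm parity_perm) H7_parity_blocks (char_poly_block_diag (H7even g)).
by rewrite char_poly_H7even char_poly_H7odd mulrC.
Qed.

Lemma chi7_factor (T : comNzRingType) (s : T) :
  chi7 (s ^+ 2) = \prod_(k < 7) ('X - (Eval s k)%:P).
Proof.
rewrite !big_ord_recr big_ord0 /= /chi7 /Eval.
by rewrite !(polyCD, polyCM, polyCB, polyC_exp, polyC_natr) /=; ring.
Qed.

Lemma map_chi7 (aR rR : comNzRingType) (f : {rmorphism aR -> rR}) (d : aR) :
  map_poly f (chi7 d) = chi7 (f d).
Proof.
rewrite /chi7 !(rmorphM, rmorphB, rmorphXn) /= map_polyX !map_polyC /=.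
by rewrite !rmorph_nat !expr2.
Qed.

Lemma Eval_inj {F : numFieldType} (s : F) : s != 0 -> injective (fun k : 'I_7 => Eval s k).
Proof.
move=> s_neq0 k l; rewrite /Eval => /addrI /(mulIf s_neq0) /addIr /eqP.
by rewrite eqr_nat => /eqP /val_inj.
Qed.

Lemma char_poly_H7_exceptional (R : rcfType) : char_poly (H7 (2 : R)) = ('X - 7%:P) ^+ 7.
Proof.
rewrite char_poly_H7 (_ : 4 - 2 ^+ 2 = 0 ^+ 2) ?chi7_factor; last by rewrite expr0n /=; lra.
rewrite (eq_bigr (fun=> 'X - 7%:P)) ?prodr_const ?card_ord // => k _.
by rewrite /Eval mulr0 addr0.
Qed.

Section JordanBasis.
Variable R : rcfType.

Local Notation s3 := (Num.sqrt (3 : R)).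
Local Notation s2 := (Num.sqrt (2 : R)).

Definition table_mx (t : seq (seq R)) : 'M[R]_7 :=
  \matrix_(i < 7, j < 7) nth 0 (nth [::] t i) j.

(* Rows: the Jordan chains e_0 N^k (k < 4) and e_1 N^k (k < 3), where
   N = H7 2 - 7. *)
Definition Pjordan : 'M[R]_7 := table_mx
  [:: [:: 1; 0; 0; 0; 0; 0; 0];
      [:: -6; 0; 2 * s3; 0; 0; 0; 0];
      [:: 24; 0; -16 * s3; 0; 8 * s3; 0; 0];
      [:: -48; 0; 48 * s3; 0; -48 * s3; 0; 48];
      [:: 0; 1; 0; 0; 0; 0; 0];
      [:: 0; -4; 0; 2 * s2; 0; 0; 0];
      [:: 0; 8; 0; -8 * s2; 0; 8; 0]].

Definition Pjordan_inv : 'M[R]_7 := table_mx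
  [:: [:: 1; 0; 0; 0; 0; 0; 0];
      [:: 0; 0; 0; 0; 1; 0; 0];
      [:: s3; s3 / 6; 0; 0; 0; 0; 0];
      [:: 0; 0; 0; 0; s2; s2 / 4; 0];
      [:: s3; s3 / 3; s3 / 24; 0; 0; 0; 0];
      [:: 0; 0; 0; 0; 1; 1 / 2; 1 / 8];
      [:: 1; 1 / 2; 1 / 8; 1 / 48; 0; 0; 0]].

Definition Jordan7 : 'M[R]_7 :=
  block_mx (jordan_block 4 (7 : R)) 0 0 (jordan_block 3 (7 : R)).

Lemma Jordan7E : Jordan7 = \matrix_(i < 7, j < 7)
  if i == j :> nat then 7 else if (j == i.+1 :> nat) && (i != 3 :> nat) then 1 else 0.
Proof.
rewrite /Jordan7 -[RHS](@submxK _ 4 3 4 3); congr (@block_mx _ 4 3 4 3 _ _ _ _);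
  apply/matrixP => -[i Hi] [j Hj]; rewrite !mxE /=.
- by case: i Hi => [|[|[|[|i]]]] Hi //; case: j Hj => [|[|[|[|j]]]] Hj.
- by case: i Hi => [|[|[|[|i]]]] Hi //; case: j Hj => [|[|[|j]]] Hj.
- by case: i Hi => [|[|[|i]]] Hi //; case: j Hj => [|[|[|[|j]]]] Hj.
- by case: i Hi => [|[|[|i]]] Hi //; case: j Hj => [|[|[|j]]] Hj.
Qed.

Lemma Pjordan_invP : Pjordan *m Pjordan_inv = 1%:M.
Proof.
have s3s3 : s3 * s3 = 3 by rewrite -expr2 sqr_sqrtr ?ler0n.
have s2s2 : s2 * s2 = 2 by rewrite -expr2 sqr_sqrtr ?ler0n.
apply/matrixP => i j; rewrite !mxE !big_ord_recl big_ord0 !mxE.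
by case: i => [[|[|[|[|[|[|[|i]]]]]]] Hi] //; case: j => [[|[|[|[|[|[|[|j]]]]]]] Hj] //=; lra.
Qed.

Lemma Pjordan_unit : Pjordan \in unitmx.
Proof. by case: (mulmx1_unit Pjordan_invP). Qed.

Lemma Pjordan_intertwines : Pjordan *m H7 2 = Jordan7 *m Pjordan.
Proof.
have s3s3 : s3 * s3 = 3 by rewrite -expr2 sqr_sqrtr ?ler0n.
have s2s2 : s2 * s2 = 2 by rewrite -expr2 sqr_sqrtr ?ler0n.
rewrite Jordan7E H7E; apply/matrixP => i j; rewrite !mxE !big_ord_recl !big_ord0 !mxE /Hentry.
case: i => [[|[|[|[|[|[|[|i]]]]]]] Hi] //; case: j => [[|[|[|[|[|[|[|j]]]]]]] Hj] //=;
  rewrite /bump /=; lra.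
Qed.

Lemma rank_Jordan7_nilpotent : \rank (Jordan7 - 7%:M) = 5%N.
Proof.
have := rank_diag_block_mx (jordan_block 4 (7 : R) - 7%:M) (jordan_block 3 7 - 7%:M).
by rewrite !rank_jordan_nilpotent -block_diag_sub_scalar.
Qed.

End JordanBasis.

Theorem mainTheorem3 (R : rcfType) :
  (* eigenvalues (with algebraic multiplicity, over C = R[i]) for every real g *)
  (forall (g : R) (s : R[i]), s ^+ 2 = ((4 - g ^+ 2)%:C)%C ->
     char_poly (map_mx (fun x : R => (x%:C)%C) (H7 g))
       = \prod_(k < 7) ('X - (Eval s k)%:P))
  /\
  (* for 0 <= g < 2: seven real, pairwise distinct eigenvalues *)
  (forall g : R, 0 <= g < 2 ->
     char_poly (H7 g) = \prod_(k < 7) ('X - (Eval (Num.sqrt (4 - g ^+ 2)) k)%:P)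
     /\ injective (fun k : 'I_7 => Eval (Num.sqrt (4 - g ^+ 2)) k))
  /\
  (* at g = 2 *)
  (char_poly (H7 (2 : R)) = ('X - 7%:P) ^+ 7
   /\ ~ diagonalizable (H7 (2 : R))
   /\ \rank (eigenspace (H7 (2 : R)) 7) = 2%N
   /\ exists P : 'M[R]_7, P \in unitmx /\
        P *m H7 (2 : R) *m invmx P
          = block_mx (jordan_block 4 (7 : R)) 0 0 (jordan_block 3 (7 : R))).
Proof.
split=> [g s hs|].
  by rewrite -map_char_poly char_poly_H7 map_chi7 -chi7_factor; congr chi7; rewrite hs.
split=> [g /andP[g_ge0 g_lt2]|].
  have d_gt0 : 0 < 4 - g ^+ 2 by nra.
  split; first by rewrite char_poly_H7 -[in chi7 _](sqr_sqrtr (ltW d_gt0)) chi7_factor.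
  by apply: Eval_inj; rewrite gt_eqF // sqrtr_gt0.
have char2 := char_poly_H7_exceptional R.
split; first exact: char2.
split.
  move=> /diagonalizable_single_eigenvalue /(_ char2) /matrixP /(_ 0 0).
  by rewrite !mxE /=; lra.
split.
  rewrite (rank_eigenspace_similar 7 (Pjordan_unit R) (Pjordan_intertwines R)).
  by rewrite /eigenspace mxrank_ker rank_Jordan7_nilpotent.
exists (Pjordan R); split; first exact: Pjordan_unit.
by rewrite Pjordan_intertwines -mulmxA mulmxV ?Pjordan_unit // mulmx1.
Qed.
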